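(* Assume the standing setup with $\beta=1/\gamma$, where $\gamma$ satisfies (A1) and (A2), and let $Y(t)$ be the solution of the gradient flow of relative entropy with arbitrary initial data $Y_0$. If $t_i\to\infty$ is a sequence of times with $\operatorname{diam}Y(t_i)\to\infty$, then a subsequence of $Y(t_i)/\operatorname{diam}Y(t_i)$ converges to $Y_\infty=(y_1^\infty,\dots,y_n^\infty)\in(\mathbb{R}^s)^n$ consisting of $n$ pairwise distinct points.
   Context: Standing setup. Fix integers $s\ge 1$ and $n>s+1$. Let $\mathcal{P}_n=\{(i,j): i,j\in\{1,\dots,n\},\ i\neq j\}$. Let $(p_{ij})_{i\neq j}$ be a probability distribution on $\mathcal{P}_n$ (so $\sum_{i\neq j}p_{ij}=1$) with $p_{ij}=p_{ji}>0$ for all $i\neq j$. For points $Y=(y_1,\dots,y_n)$ with $y_i\in\mathbb{R}^s$ define $q_{ij}=\beta(|y_i-y_j|^2)/\sum_{k\neq \ell}\beta(|y_k-y_\ell|^2)$ for $i\neq j$, and the relative entropy $\mathcal{C}(Y)=\sum_{i\neq j}p_{ij}\log(p_{ij}/q_{ij})$. The gradient flow of $\mathcal{C}$ is the ODE system $$\frac{dy_i}{dt}=4\sum_{j\neq i}(p_{ij}-q_{ij})(y_i-y_j)(\log\beta)'(|y_i-y_j|^2),\qquad i=1,\dots,n,$$ with solution $Y(t)$ existing for all $t\ge0$. Conditions: (A1) $\gamma:[0,\infty)\to(0,\infty)$ is smooth and convex with $\gamma(0)=1$, $\gamma'\ge0$, $\lim_{x\to\infty}\gamma(x)=\infty$;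 (A2) $\sup_{x\ge0}(\log\gamma)'(x)<\infty$; and $\beta:=1/\gamma$. $\operatorname{diam}Y=\max_{i,j}|y_i-y_j|$. *)

From HB Require Import structures.
From mathcomp Require Import all_boot all_order all_algebra.
From mathcomp Require Import all_classical all_reals all_analysis.
Set Implicit Arguments. Unset Strict Implicit. Unset Printing Implicit Defensive.
Import Order.TTheory GRing.Theory Num.Theory.
Import numFieldNormedType.Exports.
Local Open Scope classical_set_scope.
Local Open Scope ring_scope.

Section Defs.
Variable R : realType.

Definition smooth (f : R -> R) : Prop :=
  forall (k : nat) (x : R), derivable (derive1n k f) x 1.

Definition convex_nonneg (f : R -> R) : Prop :=
  forall x y l : R, 0 <= x -> 0 <= y -> 0 <= l <= 1 ->
    f (l * x + (1 - l) * y) <= l * f x + (1 - l) * f y.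

Definition A1 (g : R -> R) : Prop :=
  smooth g /\ convex_nonneg g /\ (forall x, 0 <= x -> 0 < g x) /\ g 0 = 1 /\
  (forall x, 0 <= x -> 0 <= derive1 g x) /\ (g x @[x --> +oo] --> +oo).

Definition A2 (g : R -> R) : Prop :=
  exists M : R, forall x, 0 <= x -> derive1 (fun z => ln (g z)) x <= M.

Definition beta (g : R -> R) (x : R) : R := (g x)^-1.

Variables n s : nat.

Definition d2 (Y : 'M[R]_(n, s)) (i j : 'I_n) : R :=
  \sum_(k < s) (Y i k - Y j k) ^+ 2.

Definition diam (Y : 'M[R]_(n, s)) : R :=
  \big[Num.max/0]_(i < n) \big[Num.max/0]_(j < n) Num.sqrt (d2 Y i j).

Definition qmat (g : R -> R) (Y : 'M[R]_(n, s)) (i j : 'I_n) : R :=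
  beta g (d2 Y i j) /
  \sum_(k < n) \sum_(l < n | l != k) beta g (d2 Y k l).

(* right-hand side of the gradient flow; row i is dy_i/dt *)
Definition flow_rhs (g : R -> R) (p : 'I_n -> 'I_n -> R) (Y : 'M[R]_(n, s))
  : 'M[R]_(n, s) :=
  \matrix_(i < n, k < s)
    (4 * \sum_(j < n | j != i)
       (p i j - qmat g Y i j) * (Y i k - Y j k) *
       derive1 (fun x => ln (beta g x)) (d2 Y i j)).

Definition prob_pairs (p : 'I_n -> 'I_n -> R) : Prop :=
  (forall i j, i != j -> 0 < p i j /\ p i j = p j i) /\
  \sum_(i < n) \sum_(j < n | j != i) p i j = 1.
End Defs.

From HB Require Import structures.
From mathcomp Require Import all_boot all_order all_algebra.
From mathcomp Require Import all_classical all_reals all_analysis.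
From mathcomp Require Import ring lra.
Import Order.TTheory GRing.Theory Num.Theory.
Import numFieldNormedType.Exports.
Local Open Scope classical_set_scope.
Local Open Scope ring_scope.

(* The cross entropy [\sum p_ij (- ln q_ij)] decreases along the flow (its
   derivative is minus the squared speed) and dominates each term
   [p_ab (- ln q_ab)], so for t >= 1 all q_ab stay above a constant c > 0.
   The flow also fixes the centre of mass, hence Y / diam Y stays bounded and a
   subsequence converges.  If (a, b) realizes the diameter D, then
   c <= q_ab <= beta(D^2) / beta(d_ij) gives gamma(d_ij) >= c gamma(D^2), while
   convexity and gamma(0) = 1 give gamma(d_ij) <= 1 + (d_ij / D^2) gamma(D^2).
   Once gamma(D^2) >= 2 / c this forces d_ij / D^2 >= c / 2, so the limit
   points stay apart. *)

Section Subsequences.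
Context {R : realType}.

Lemma increasing_seq_geq {phi : nat -> nat} : increasing_seq phi -> forall k, (k <= phi k)%N.
Proof.
by move=> /increasing_seqP phi_lt; elim=> [//|k IH]; exact: leq_ltn_trans IH (phi_lt k).
Qed.

Lemma increasing_seq_comp {phi psi : nat -> nat} :
  increasing_seq phi -> increasing_seq psi -> increasing_seq (phi \o psi).
Proof. by move=> phi_incr psi_incr x y; rewrite /= phi_incr; exact: psi_incr. Qed.

Lemma cvg_subseq {T : topologicalType} (u : nat -> T) (l : T) (phi : nat -> nat) :
  increasing_seq phi -> u @ \oo --> l -> u \o phi @ \oo --> l.
Proof.
move=> phi_incr ul; apply: cvg_comp ul.
apply/cvgnyPge => A; near=> k; apply: leq_trans _ (increasing_seq_geq phi_incr k).
by near: k; exists A.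
Unshelve. all: end_near. Qed.

Lemma bounded_fam_cvgn_subseq {I : eqType} (a : I -> nat -> R) (l : seq I) :
  (forall i, exists B : R, forall k, `|a i k| <= B) ->
  exists2 phi : nat -> nat, increasing_seq phi & forall i, i \in l -> cvgn (a i \o phi).
Proof.
move=> a_bnd; elim: l => [|i l [phi phi_incr IH]]; first by exists id.
have [B aiB] := a_bnd i.
have : bounded_fun (a i \o phi).
  exists B; split; first exact: num_real.
  by move=> M BM k _; apply: le_trans (aiB (phi k)) _; exact: ltW.
move=> /bolzano_weierstrass[psi psi_incr cv].
exists (phi \o psi); first exact: increasing_seq_comp.
move=> j; rewrite inE => /orP[/eqP -> |jl]; first exact: cv.
by have /cvg_ex[L ajL] := IH j jl; apply/cvg_ex; exists L; exact: (cvg_subseq _ _ _ psi_incr ajL).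
Qed.

Lemma cvg_mx_entries {m n : nat} (M : nat -> 'M[R]_(m, n)) (L : 'M[R]_(m, n)) :
  (forall i j, (fun k => M k i j) @ \oo --> L i j) -> M @ \oo --> L.
Proof.
move=> ML; apply/cvgrPdist_le => /= e e_gt0; near=> k.
rewrite /Num.Def.normr /= mx_normrE (bigmax_le _ (ltW e_gt0)) //= => ij _.
rewrite !mxE /=; move: ij; near: k; apply: filter_forall => /= ij.
exact: ((cvgrPdist_le _ _).1 (ML ij.1 ij.2)).
Unshelve. all: by end_near. Qed.

Lemma bounded_mx_seq_cvg_subseq {m n : nat} (M : nat -> 'M[R]_(m, n)) :
  (forall i j, exists B : R, forall k, `|M k i j| <= B) ->
  exists2 phi : nat -> nat, increasing_seq phi & cvgn (M \o phi).
Proof.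
move=> M_bnd.
have [|phi phi_incr cv] := bounded_fam_cvgn_subseq (fun ij k => M k ij.1 ij.2) (enum predT).
  by case=> i j; exact: M_bnd.
exists phi => //; apply/cvg_ex.
exists (\matrix_(i, j) limn (fun k => M (phi k) i j)).
by apply: cvg_mx_entries => i j; rewrite mxE; apply: (cv (i, j)); rewrite mem_enum.
Qed.

End Subsequences.

Section RealFunctions.
Context {R : realType}.

Lemma ler0_derive1_nincr_pos (f : R -> R) :
  (forall x : R, 0 < x -> derivable f x 1 /\ derive1 f x <= 0) ->
  forall x y, 0 < x -> x <= y -> f y <= f x.
Proof.
move=> f'_le0 x y x_gt0 xy.
have y_gt0 : 0 < y by apply: lt_le_trans xy.
apply: (@ler0_derive1_le_oo R f 0 (y + 1)) => //.
- by move=> z; rewrite in_itv /= => /andP[/f'_le0[]].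
- by move=> z; rewrite in_itv /= => /andP[/f'_le0[]].
- move=> z; rewrite inE /= in_itv /= => /andP[/f'_le0[f_der _] _].
  exact/differentiable_continuous/derivable1_diffP.
- by rewrite in_itv /= y_gt0 /= ltrDl.
- by rewrite in_itv /= x_gt0 /= (le_lt_trans xy) // ltrDl.
Qed.

Lemma is_derive0_cst_pos (f : R -> R) :
  (forall x : R, 0 < x -> is_derive x 1 f 0) -> forall x y, 0 < x -> 0 < y -> f x = f y.
Proof.
have nincr (g : R -> R) : (forall x : R, 0 < x -> is_derive x 1 g 0) ->
    forall x y, 0 < x -> x <= y -> g y <= g x.
  move=> g'0; apply: ler0_derive1_nincr_pos => x /g'0[g_der g'x].
  by rewrite derive1E g'x.
move=> f'0 x y x_gt0 y_gt0; wlog xy : x y x_gt0 y_gt0 / x <= y.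
  by move=> H; case: (leP x y) => [|/ltW] xy; [exact: H | symmetry; exact: H].
apply/eqP; rewrite eq_le andbC (nincr f) //= -lerN2.
by apply: (nincr (fun z => - f z)) => // z /f'0/is_deriveN; rewrite oppr0.
Qed.

Lemma is_derive_sum_cond {m : nat} (P : pred 'I_m) (h : 'I_m -> R -> R)
    (dh : 'I_m -> R) (x : R) :
  (forall i, P i -> is_derive x 1 (h i) (dh i)) ->
  is_derive x 1 (fun y => \sum_(i < m | P i) h i y) (\sum_(i < m | P i) dh i).
Proof.
move=> h_der.
have -> : (fun y => \sum_(i < m | P i) h i y) =
    \sum_(i < m) (fun y => if P i then h i y else 0).
  by rewrite fct_sumE; apply/funext => y; rewrite big_mkcond.
rewrite [X in is_derive _ _ _ X]big_mkcond /=; apply: is_derive_sum => i.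
by case: ifP => [/h_der|_] //; exact: is_derive_cst.
Qed.

Lemma cvgry_sqr {T : Type} {F : set_system T} {FF : Filter F} {f : T -> R} :
  f @ F --> +oo -> (fun x => f x ^+ 2) @ F --> +oo.
Proof.
move=> /cvgryPge f_cvg; apply/cvgryPge => A.
near=> x; have /andP[Af f_ge1] : (A <= f x) && (1 <= f x).
  by rewrite -ge_max; near: x; exact: f_cvg.
by apply: le_trans Af _; rewrite expr2 ler_peMl // (le_trans ler01).
Unshelve. all: end_near. Qed.

End RealFunctions.

Section PairwiseSums.
Context {R : numDomainType} {n : nat}.
Implicit Types (A w : 'I_n -> 'I_n -> R) (G : 'I_n -> R).

Lemma ler_term_sum (P : pred 'I_n) (F : 'I_n -> R) j :
  (forall i, P i -> 0 <= F i) -> P j -> F j <= \sum_(i | P i) F i.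
Proof.
move=> F_ge0 Pj; rewrite (bigD1 j) //= lerDl.
by apply: sumr_ge0 => i /andP[/F_ge0].
Qed.

Lemma ler_offdiag_term (F : 'I_n -> 'I_n -> R) a b :
  (forall i j, j != i -> 0 <= F i j) -> b != a ->
  F a b <= \sum_i \sum_(j | j != i) F i j.
Proof.
move=> F_ge0 ba.
apply: le_trans (ler_term_sum (fun j => j != a) (F a) b _ ba) _; first by move=> j /F_ge0.
apply: (ler_term_sum xpredT (fun i => \sum_(j | j != i) F i j) a) => // i _.
by apply: sumr_ge0 => j /F_ge0.
Qed.

Lemma sum_antisym_mulB A G : (forall i j, A j i = - A i j) ->
  \sum_i \sum_j A i j * (G i - G j) = 2 * \sum_i G i * \sum_j A i j.
Proof.
move=> A_anti.
have swap : \sum_i \sum_j A i j * G j = - \sum_i \sum_j A i j * G i.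
  rewrite exchange_big /= -sumrN; apply: eq_bigr => j _.
  by rewrite -sumrN; apply: eq_bigr => i _; rewrite A_anti mulNr.
under eq_bigr => i _ do under eq_bigr => j _ do rewrite mulrBr.
under eq_bigr => i _ do rewrite sumrB.
rewrite sumrB swap opprK mulr2n mulrDl mul1r.
by congr (_ + _); apply: eq_bigr => i _; rewrite mulr_sumr; apply: eq_bigr => j _; rewrite mulrC.
Qed.

Lemma sum_antisym_eq0 A : (forall i j, A j i = - A i j) -> \sum_i \sum_j A i j = 0.
Proof.
move=> A_anti; have := sum_antisym_mulB A (fun _ => 1) A_anti.
rewrite big1 => [|i _]; last by rewrite big1 // => j _; rewrite subrr mulr0.
under eq_bigr do rewrite mul1r.
by move/esym/eqP; rewrite mulf_eq0 pnatr_eq0 /= => /eqP.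
Qed.

Lemma sum_sym_flowE {s : nat} (y F : 'M[R]_(n, s)) w :
  (forall i j, w j i = w i j) ->
  (forall i k, F i k = 4 * \sum_j w i j * (y i k - y j k)) ->
  \sum_i \sum_j w i j * (\sum_k 2 * (y i k - y j k) * (F i k - F j k)) =
  \sum_i \sum_k F i k ^+ 2.
Proof.
move=> wC FE.
have -> : \sum_i \sum_j w i j * (\sum_k 2 * (y i k - y j k) * (F i k - F j k)) =
    \sum_k 2 * \sum_i \sum_j (w i j * (y i k - y j k)) * (F i k - F j k).
  under eq_bigr => i _ do under eq_bigr => j _ do rewrite mulr_sumr.
  under eq_bigr => i _ do rewrite exchange_big /=.
  rewrite exchange_big /=; apply: eq_bigr => k _.
  rewrite mulr_sumr; apply: eq_bigr => i _; rewrite mulr_sumr; apply: eq_bigr => j _.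
  ring.
rewrite [RHS]exchange_big /=; apply: eq_bigr => k _.
rewrite sum_antisym_mulB => [|i j]; last by rewrite wC -mulrN opprB.
rewrite mulrA mulr_sumr; apply: eq_bigr => i _.
by rewrite expr2 {2}FE; ring.
Qed.

End PairwiseSums.

Definition Zsum {R : realType} {n s : nat} (gam : R -> R) (M : 'M[R]_(n, s)) : R :=
  \sum_(k < n) \sum_(l < n | l != k) beta gam (d2 M k l).

(* The relative entropy of the paper is [cross_entropy] plus the constant
   [\sum p_ij ln p_ij]. *)
Definition cross_entropy {R : realType} {n s : nat} (gam : R -> R)
    (p : 'I_n -> 'I_n -> R) (M : 'M[R]_(n, s)) : R :=
  \sum_(i < n) \sum_(j < n | j != i) p i j * - ln (qmat gam M i j).

Section Distances.
Context {R : realType} {n s : nat}.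
Implicit Types M : 'M[R]_(n, s).

Lemma d2_ge0 M i j : 0 <= d2 M i j.
Proof. by apply: sumr_ge0 => k _; exact: sqr_ge0. Qed.

Lemma d2C M i j : d2 M i j = d2 M j i.
Proof. by apply: eq_bigr => k _; rewrite -sqrrN opprB. Qed.

Lemma d2xx M i : d2 M i i = 0.
Proof. by rewrite /d2 big1 // => k _; rewrite subrr expr0n. Qed.

Lemma d2Z M (a : R) i j : d2 (a *: M) i j = a ^+ 2 * d2 M i j.
Proof. by rewrite /d2 mulr_sumr; apply: eq_bigr => k _; rewrite !mxE -mulrBr exprMn. Qed.

Lemma row_neq_d2_gt0 M i j : 0 < d2 M i j -> row i M != row j M.
Proof.
apply: contraTneq => rij; rewrite /d2 big1 ?ltxx // => k _.
by have := congr1 (fun r : 'rV[R]_s => r 0 k) rij; rewrite !mxE => ->; rewrite subrr expr0n.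
Qed.

Lemma cvg_d2 {N : nat -> 'M[R]_(n, s)} {L : 'M[R]_(n, s)} i j :
  N @ \oo --> L -> (fun k => d2 (N k) i j) @ \oo --> d2 L i j.
Proof.
move=> NL; have N_entry a b : (fun k => N k a b) @ \oo --> L a b.
  exact: cvg_comp NL (@coord_continuous R n s a b L).
apply: (@cvg_big R 'I_s +%R 0 xpredT add_continuous nat \oo (index_enum 'I_s)
  (fun l k => (N k i l - N k j l) ^+ 2) (fun l => (L i l - L j l) ^+ 2)) => // l _.
rewrite expr2; under eq_cvg do rewrite expr2.
by apply: cvgM; apply: cvgB; exact: N_entry.
Qed.

Lemma row_neq_cvg_d2_ge {N : nat -> 'M[R]_(n, s)} {L : 'M[R]_(n, s)} (c : R) i j :
  0 < c -> (forall k, c <= d2 (N k) i j) -> N @ \oo --> L -> row i L != row j L.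
Proof.
move=> c_gt0 N_ge NL; apply: row_neq_d2_gt0; apply: lt_le_trans c_gt0 _.
have d2_cvg := cvg_d2 i j NL.
rewrite -(cvg_lim _ d2_cvg) //; apply: limr_ge; first exact: cvgP d2_cvg.
exact: nearW.
Qed.

Lemma sqrt_d2_le_diam M i j : Num.sqrt (d2 M i j) <= diam M.
Proof. by rewrite /diam; apply: le_trans (le_bigmax _ _ i); exact: le_bigmax. Qed.

Lemma d2_le_diam M i j : d2 M i j <= diam M ^+ 2.
Proof.
rewrite -(sqr_sqrtr (d2_ge0 M i j)) lerXn2r ?nnegrE ?sqrtr_ge0 ?sqrt_d2_le_diam //.
exact: le_trans (sqrtr_ge0 _) (sqrt_d2_le_diam M i j).
Qed.

Lemma diam_attained M : (0 < n)%N -> exists a b, diam M = Num.sqrt (d2 M a b).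
Proof.
move=> n_gt0; pose i0 := Ordinal n_gt0; rewrite /diam.
have [a _ ->] := eq_bigmax i0 xpredT
  (fun a => \big[Num.max/0]_(j < n) Num.sqrt (d2 M a j)) isT (fun a _ => bigmax_ge_id _ _ _ _).
have [b _ ->] := eq_bigmax i0 xpredT (fun b => Num.sqrt (d2 M a b)) isT (fun b _ => sqrtr_ge0 _).
by exists a, b.
Qed.

Lemma entry_diff_le_diam M i j k : `|M i k - M j k| <= diam M.
Proof.
apply: le_trans (sqrt_d2_le_diam M i j).
rewrite -sqrtr_sqr ler_sqrt ?d2_ge0 //.
by apply: (ler_term_sum xpredT (fun l => (M i l - M j l) ^+ 2)) => // l _; exact: sqr_ge0.
Qed.

Lemma entry_le_diam_centroid M i k : (0 < n)%N ->
  `|M i k| <= diam M + `|\sum_(j < n) M j k| / n%:R.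
Proof.
move=> n_gt0; have n_pos : 0 < (n%:R : R) by rewrite ltr0n.
have -> : M i k = (\sum_(j < n) (M i k - M j k) + \sum_(j < n) M j k) / n%:R.
  by rewrite sumrB addrNK sumr_const card_ord -[M i k *+ n]mulr_natr mulfK // gt_eqF.
rewrite normrM normfV (gtr0_norm n_pos) ler_pdivrMr // mulrDl divfK ?gt_eqF //.
apply: le_trans (ler_normD _ _) _; rewrite lerD2r.
apply: le_trans (ler_norm_sum _ _ _) _.
apply: le_trans (_ : \sum_(j < n) diam M <= _).
  by apply: ler_sum => j _; exact: entry_diff_le_diam.
by rewrite sumr_const card_ord mulr_natr.
Qed.

End Distances.

Lemma convex_lower_ratio {R : realType} {g : R -> R} {c X d : R} :
  convex_nonneg g -> g 0 = 1 -> 0 < c -> 0 < X -> 0 <= d <= X ->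
  c * g X <= g d -> 2 / c <= g X -> c / 2 * X <= d.
Proof.
move=> g_cvx g0 c_gt0 X_gt0 /andP[d_ge0 d_leX] cg_le g_ge.
pose r := d / X.
have r_ge0 : 0 <= r by rewrite divr_ge0 // ltW.
have r_le1 : r <= 1 by rewrite ler_pdivrMr // mul1r.
have rX : r * X = d by rewrite divfK // gt_eqF.
have chord : g d <= r * g X + (1 - r).
  have := g_cvx X 0 r (ltW X_gt0) (lexx 0); rewrite r_ge0 r_le1 => /(_ isT).
  by rewrite mulr0 addr0 rX g0 mulr1.
have gX_gt0 : 0 < g X by apply: lt_le_trans g_ge; rewrite divr_gt0.
have two_le : 2 <= c * g X by move: g_ge; rewrite ler_pdivrMr // mulrC.
have : c <= 2 * r by nra.
by rewrite -rX; nra.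
Qed.

Section Kernel.
Context {R : realType} {n s : nat} {gam : R -> R} {p : 'I_n -> 'I_n -> R}.
Hypotheses (hA1 : A1 gam) (hp : prob_pairs p) (n_gt1 : (1 < n)%N).
Implicit Types M : 'M[R]_(n, s).

Lemma gam_gt0 {x : R} : 0 <= x -> 0 < gam x.
Proof. by case: hA1 => _ [_ [gam_pos _]]; exact: gam_pos. Qed.

Lemma gam_derivable (x : R) : derivable gam x 1.
Proof. by case: hA1 => gam_smooth _; have := gam_smooth 0%N x; rewrite derive1n0. Qed.

Lemma beta_gt0 {x : R} : 0 <= x -> 0 < beta gam x.
Proof. by move=> x_ge0; rewrite invr_gt0 gam_gt0. Qed.

Lemma ln_beta_derivable {x : R} : 0 <= x -> derivable (fun y => ln (beta gam y)) x 1.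
Proof.
move=> x_ge0; have gx_neq0 : gam x != 0 by rewrite gt_eqF // gam_gt0.
have beta_der := is_deriveV gx_neq0 (derivableP (gam_derivable x)).
by case: (is_derive1_comp (is_derive1_ln (beta_gt0 x_ge0)) beta_der).
Qed.

Lemma p_gt0 {i j : 'I_n} : j != i -> 0 < p i j.
Proof. by rewrite eq_sym => /hp.1[]. Qed.

Lemma pC i j : p j i = p i j.
Proof. by have [-> //|/hp.1[_ ->]] := eqVneq i j. Qed.

Lemma beta_le_Zsum M {a b : 'I_n} : b != a -> beta gam (d2 M a b) <= Zsum gam M.
Proof.
apply: (ler_offdiag_term (fun i j => beta gam (d2 M i j))) => i j _.
exact/ltW/beta_gt0/d2_ge0.
Qed.

Lemma Zsum_gt0 M : 0 < Zsum gam M.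
Proof.
have ba : Ordinal n_gt1 != Ordinal (ltnW n_gt1) by [].
by apply: lt_le_trans _ (beta_le_Zsum M ba); exact/beta_gt0/d2_ge0.
Qed.

Lemma qmatC M i j : qmat gam M i j = qmat gam M j i.
Proof. by rewrite /qmat d2C. Qed.

Lemma qmat_gt0 M i j : 0 < qmat gam M i j.
Proof. by rewrite divr_gt0 ?beta_gt0 ?d2_ge0 //; exact: Zsum_gt0. Qed.

Lemma qmat_le1 M i j : j != i -> qmat gam M i j <= 1.
Proof.
move=> ji; rewrite ler_pdivrMr ?mul1r; first exact: beta_le_Zsum.
exact: Zsum_gt0.
Qed.

Lemma cross_entropyE M : cross_entropy gam p M =
  - (\sum_i \sum_(j | j != i) p i j * ln (beta gam (d2 M i j))) + ln (Zsum gam M).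
Proof.
have ln_qmat i j : ln (qmat gam M i j) = ln (beta gam (d2 M i j)) - ln (Zsum gam M).
  have g_gt0 := gam_gt0 (d2_ge0 M i j); have Z_gt0 := Zsum_gt0 M.
  by rewrite lnM ?lnV ?posrE ?invr_gt0.
rewrite /cross_entropy.
under eq_bigr => i _ do under eq_bigr => j _ do rewrite ln_qmat opprB mulrBr.
under eq_bigr => i _ do rewrite sumrB.
rewrite sumrB [RHS]addrC; congr (_ - _).
under eq_bigr => i _ do rewrite -mulr_suml.
by rewrite -mulr_suml hp.2 mul1r.
Qed.

Lemma cross_entropy_ge_term M {a b : 'I_n} : b != a ->
  p a b * - ln (qmat gam M a b) <= cross_entropy gam p M.
Proof.
apply: (ler_offdiag_term (fun i j => p i j * - ln (qmat gam M i j))) => i j ji.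
by rewrite mulr_ge0 ?oppr_ge0 ?ln_le0 ?qmat_le1 // ltW // p_gt0.
Qed.

Lemma qmat_ge_cross_entropy M E a b : b != a -> cross_entropy gam p M <= E ->
  expR (- (E * \sum_i \sum_(j | j != i) (p i j)^-1)) <= qmat gam M a b.
Proof.
move=> ba CE_le; have pab_gt0 := p_gt0 ba.
have CE_ge : p a b * - ln (qmat gam M a b) <= E.
  exact: le_trans (cross_entropy_ge_term M ba) CE_le.
have E_ge0 : 0 <= E.
  by apply: le_trans CE_ge; rewrite mulr_ge0 ?oppr_ge0 ?ln_le0 ?qmat_le1 // ltW.
rewrite -[qmat _ _ _ _]lnK ?posrE ?qmat_gt0 // ler_expR lerNl.
apply: le_trans (_ : E / p a b <= _); first by rewrite ler_pdivlMr // mulrC.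
rewrite ler_wpM2l //; apply: (ler_offdiag_term (fun i j => (p i j)^-1)) => // i j.
by move=> /p_gt0/ltW; rewrite invr_ge0.
Qed.

Lemma qmat_ge_gam_le M c a b i j : 0 < c -> c <= qmat gam M a b -> j != i ->
  c * gam (d2 M a b) <= gam (d2 M i j).
Proof.
move=> c_gt0 c_le ji.
have gab_gt0 := gam_gt0 (d2_ge0 M a b); have gij_gt0 := gam_gt0 (d2_ge0 M i j).
have : c * beta gam (d2 M i j) <= beta gam (d2 M a b).
  apply: le_trans (_ : c * Zsum gam M <= _).
    by rewrite ler_wpM2l ?beta_le_Zsum // ltW.
  by move: c_le; rewrite /qmat ler_pdivlMr //; exact: Zsum_gt0.
by rewrite /beta ler_pdivrMr // mulrC -ler_pdivlMr // invrK.
Qed.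

Lemma d2_scaled_diam_ge M c i j : 0 < c -> 0 < diam M ->
  (forall a b, b != a -> c <= qmat gam M a b) -> 2 / c <= gam (diam M ^+ 2) -> j != i ->
  c / 2 <= d2 ((diam M)^-1 *: M) i j.
Proof.
move=> c_gt0 D_gt0 q_ge gD_ge ji; case: hA1 => _ [gam_cvx [_ [gam0 _]]].
have [a [b Dab]] := diam_attained M (ltnW n_gt1).
have D2 : diam M ^+ 2 = d2 M a b by rewrite Dab sqr_sqrtr ?d2_ge0.
have ba : b != a by apply: contraTneq D_gt0 => ba; rewrite Dab ba d2xx sqrtr0 ltxx.
rewrite d2Z exprVn [X in _ <= X]mulrC ler_pdivlMr ?exprn_gt0 //.
apply: (convex_lower_ratio gam_cvx gam0 c_gt0 (exprn_gt0 _ D_gt0)) => //.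
  by rewrite d2_ge0 d2_le_diam.
by rewrite D2; apply: qmat_ge_gam_le => //; exact: q_ge.
Qed.

End Kernel.

Section Flow.
Context {R : realType} {n s : nat} {gam : R -> R} {p : 'I_n -> 'I_n -> R}.
Hypotheses (hA1 : A1 gam) (hp : prob_pairs p) (n_gt1 : (1 < n)%N).
Context {Y : R -> 'M[R]_(n, s)}.
Hypothesis hY : forall u : R, 0 < u -> is_derive u 1 Y (flow_rhs gam p (Y u)).

Local Notation F u := (flow_rhs gam p (Y u)).
Local Notation L u i j := (derive1 (fun x => ln (beta gam x)) (d2 (Y u) i j)).
Local Notation dd u i j :=
  (\sum_(k < s) 2 * (Y u i k - Y u j k) * (F u i k - F u j k)).

Let w u i j := (p i j - qmat gam (Y u) i j) * L u i j.

Let wC u i j : w u j i = w u i j.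
Proof. by rewrite /w (pC hp) qmatC d2C. Qed.

Let flow_rhsE u i k : F u i k = 4 * \sum_j w u i j * (Y u i k - Y u j k).
Proof.
rewrite mxE; congr (_ * _); rewrite [RHS](bigD1 i) //= subrr mulr0 add0r.
by apply: eq_bigr => j _; rewrite /w mulrAC.
Qed.

Lemma is_derive_entry {u : R} i k : 0 < u -> is_derive u 1 (fun x => Y x i k) (F u i k).
Proof.
move=> /hY[Y_der Y'u].
have Yik_der : derivable (fun x => Y x i k) u 1 by move/derivable_mxP: Y_der => /(_ i k).
apply: DeriveDef => //.
have := derive_mx Y_der; rewrite Y'u => /(congr1 (fun M : 'M[R]_(n, s) => M i k)) ->.
by rewrite mxE.
Qed.

Lemma is_derive_d2 {u : R} i j : 0 < u -> is_derive u 1 (fun x => d2 (Y x) i j) (dd u i j).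
Proof.
move=> u_gt0; apply: (is_derive_sum_cond xpredT) => k _.
have dk : is_derive u 1 (fun x => Y x i k - Y x j k) (F u i k - F u j k).
  exact: is_deriveB (is_derive_entry i k u_gt0) (is_derive_entry j k u_gt0).
have -> : (fun x => (Y x i k - Y x j k) ^+ 2) =
    (fun x => (Y x i k - Y x j k) * (Y x i k - Y x j k)).
  by apply/funext => x; rewrite expr2.
by apply: is_derive_eq (is_deriveM dk dk) _; rewrite /GRing.scale /=; ring.
Qed.

Lemma is_derive_ln_beta_d2 {u : R} i j : 0 < u ->
  is_derive u 1 (fun x => ln (beta gam (d2 (Y x) i j))) (L u i j * dd u i j).
Proof.
move=> u_gt0; have ln_beta_der := derivableP (ln_beta_derivable hA1 (d2_ge0 (Y u) i j)).
rewrite -derive1E in ln_beta_der.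
exact: is_derive1_comp ln_beta_der (is_derive_d2 i j u_gt0).
Qed.

(* [beta = expR (ln beta)] expresses the derivative of [beta] through the
   factor [(ln beta)'] occurring in the flow. *)
Lemma is_derive_beta_d2 {u : R} i j : 0 < u ->
  is_derive u 1 (fun x => beta gam (d2 (Y x) i j))
    (beta gam (d2 (Y u) i j) * (L u i j * dd u i j)).
Proof.
move=> u_gt0; have expR_ln x : 0 <= x -> expR (ln (beta gam x)) = beta gam x.
  by move=> x_ge0; rewrite lnK // posrE beta_gt0.
have -> : (fun x => beta gam (d2 (Y x) i j)) = (fun x => expR (ln (beta gam (d2 (Y x) i j)))).
  by apply/funext => x; rewrite expR_ln ?d2_ge0.
have := is_derive1_comp (is_derive_expR _) (is_derive_ln_beta_d2 i j u_gt0).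
by rewrite expR_ln ?d2_ge0.
Qed.

Lemma is_derive_cross_entropy {u : R} : 0 < u ->
  is_derive u 1 (fun x => cross_entropy gam p (Y x)) (- \sum_i \sum_k F u i k ^+ 2).
Proof.
move=> u_gt0.
have S_der : is_derive u 1
    (fun x => \sum_i \sum_(j | j != i) p i j * ln (beta gam (d2 (Y x) i j)))
    (\sum_i \sum_(j | j != i) p i j * (L u i j * dd u i j)).
  apply: (is_derive_sum_cond xpredT) => i _; apply: is_derive_sum_cond => j _.
  exact: is_deriveZ (is_derive_ln_beta_d2 i j u_gt0).
have Z_der : is_derive u 1 (fun x => Zsum gam (Y x))
    (\sum_k \sum_(l | l != k) beta gam (d2 (Y u) k l) * (L u k l * dd u k l)).
  apply: (is_derive_sum_cond xpredT) => k _; apply: is_derive_sum_cond => l _.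
  exact: is_derive_beta_d2.
have lnZ_der := is_derive1_comp (is_derive1_ln (Zsum_gt0 hA1 n_gt1 (Y u))) Z_der.
have -> : (fun x => cross_entropy gam p (Y x)) = (fun x =>
    - (\sum_i \sum_(j | j != i) p i j * ln (beta gam (d2 (Y x) i j))) + ln (Zsum gam (Y x))).
  by apply/funext => x; rewrite (cross_entropyE hA1 hp n_gt1).
apply: is_derive_eq (is_deriveD (is_deriveN S_der) lnZ_der) _.
rewrite -(sum_sym_flowE _ _ _ (wC u) (flow_rhsE u)).
have -> : \sum_i \sum_j w u i j * dd u i j = \sum_i \sum_(j | j != i) w u i j * dd u i j.
  apply: eq_bigr => i _; rewrite [LHS](bigD1 i) //= big1 ?mulr0 ?add0r // => k _.
  by rewrite subrr mulr0 mul0r.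
under [in RHS]eq_bigr => i _ do under eq_bigr => j _ do rewrite /w mulrBl mulrBl.
under [in RHS]eq_bigr => i _ do rewrite sumrB.
rewrite sumrB opprB addrC /Zsum; congr (_ - _).
  rewrite mulr_sumr; apply: eq_bigr => k _; rewrite mulr_sumr; apply: eq_bigr => l _.
  by rewrite /qmat; ring.
by apply: eq_bigr => i _; apply: eq_bigr => j _; ring.
Qed.

Lemma cross_entropy_nincr {x y : R} : 0 < x -> x <= y ->
  cross_entropy gam p (Y y) <= cross_entropy gam p (Y x).
Proof.
apply: (ler0_derive1_nincr_pos (fun u => cross_entropy gam p (Y u))).
move=> u /is_derive_cross_entropy[CE_der CE'u].
split => //; rewrite derive1E CE'u oppr_le0.
by apply: sumr_ge0 => i _; apply: sumr_ge0 => k _; exact: sqr_ge0.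
Qed.

Lemma centroid_const {x y : R} k : 0 < x -> 0 < y ->
  \sum_i Y x i k = \sum_i Y y i k.
Proof.
apply: (is_derive0_cst_pos (fun u => \sum_i Y u i k)) => u u_gt0.
apply: is_derive_eq (is_derive_sum_cond xpredT _ _ u (fun i _ => is_derive_entry i k u_gt0)) _.
under eq_bigr do rewrite flow_rhsE; rewrite -mulr_sumr sum_antisym_eq0 ?mulr0 // => i j.
by rewrite wC -mulrN opprB.
Qed.

Lemma flow_qmat_lower : exists2 c : R, 0 < c &
  forall u a b, 1 <= u -> b != a -> c <= qmat gam (Y u) a b.
Proof.
exists (expR (- (cross_entropy gam p (Y 1) * \sum_i \sum_(j | j != i) (p i j)^-1))).
  exact: expR_gt0.
move=> u a b u_ge1 ba; apply: (qmat_ge_cross_entropy hA1 hp n_gt1) => //.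
exact: cross_entropy_nincr ltr01 u_ge1.
Qed.

Lemma flow_scaled_entry_le (u : R) i k : 0 < u -> 1 <= diam (Y u) ->
  `|((diam (Y u))^-1 *: Y u) i k| <= 1 + `|\sum_j Y 1 j k| / n%:R.
Proof.
move=> u_gt0 D_ge1; have D_gt0 : 0 < diam (Y u) by apply: lt_le_trans D_ge1.
rewrite mxE normrM normfV (gtr0_norm D_gt0) ler_pdivrMl // mulrDr mulr1.
rewrite -(centroid_const k u_gt0 ltr01); apply: le_trans (entry_le_diam_centroid _ _ _ _) _.
  exact: ltnW.
by rewrite lerD2l ler_peMl // divr_ge0.
Qed.

End Flow.

Theorem theorem1p3 (R : realType) (s n : nat) (gam : R -> R)
  (p : 'I_n -> 'I_n -> R) (Y : R -> 'M[R]_(n, s)) (t : nat -> R) :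
  (1 <= s)%N -> (s.+1 < n)%N ->
  prob_pairs p -> A1 gam -> A2 gam ->
  (forall u : R, 0 < u -> is_derive u 1 Y (flow_rhs gam p (Y u))) ->
  t @ \oo --> +oo ->
  (fun k => diam (Y (t k))) @ \oo --> +oo ->
  exists (phi : nat -> nat) (Yinf : 'M[R]_(n, s)),
    (forall k, (phi k < phi k.+1)%N) /\
    (fun k => (diam (Y (t (phi k))))^-1 *: Y (t (phi k))) @ \oo --> Yinf /\
    (forall i j : 'I_n, i != j -> row i Yinf != row j Yinf).
Proof.
move=> _ s_lt_n hp hA1 _ hY t_cvg D_cvg.
have n_gt1 : (1 < n)%N by apply: leq_trans s_lt_n.
have [c c_gt0 q_ge_c] := flow_qmat_lower hA1 hp n_gt1 hY.
have gamD_cvg : (fun k => gam (diam (Y (t k)) ^+ 2)) @ \oo --> +oo.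
  have gam_cvg : gam x @[x --> +oo] --> +oo by case: hA1 => _ [_ [_ [_ []]]].
  exact: cvg_comp (cvgry_sqr D_cvg) gam_cvg.
have [N _ large] : \forall k \near \oo,
    [/\ 1 <= t k, 1 <= diam (Y (t k)) & 2 / c <= gam (diam (Y (t k)) ^+ 2)].
  move/cvgryPge: t_cvg => /(_ 1) t_ge1; move/cvgryPge: (D_cvg) => /(_ 1) D_ge1.
  move/cvgryPge: gamD_cvg => /(_ (2 / c)) gD_ge.
  by near=> k; split; near: k.
pose Z k := (diam (Y (t (k + N)%N)))^-1 *: Y (t (k + N)%N).
have [phi phi_incr /cvg_ex[Yinf Z_cvg]] : exists2 phi, increasing_seq phi & cvgn (Z \o phi).
  apply: bounded_mx_seq_cvg_subseq => i l; exists (1 + `|\sum_j Y 1 j l| / n%:R) => k.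
  have [t_ge1 D_ge1 _] := large (k + N)%N (leq_addl _ _).
  exact: (flow_scaled_entry_le hp n_gt1 hY _ i l (lt_le_trans ltr01 t_ge1) D_ge1).
exists (fun k => phi k + N)%N, Yinf; split; [|split] => //.
  by move=> k; rewrite ltn_add2r; exact: (increasing_seqP phi).2 phi_incr k.
move=> i j ij; apply: (row_neq_cvg_d2_ge (c / 2) i j _ _ Z_cvg); first by rewrite divr_gt0.
move=> k /=; have [t_ge1 D_ge1 gD_ge] := large (phi k + N)%N (leq_addl _ _).
apply: (d2_scaled_diam_ge hA1 n_gt1 _ _ _ _ c_gt0 (lt_le_trans ltr01 D_ge1)) => //.
  by move=> a b; apply: q_ge_c.
by rewrite eq_sym.
Unshelve. all: end_near.
Qed.
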